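(* Let $g\colon\mathbb{R}^d\to[0,\infty)$ be a bounded non-negative function with $\|g\|_\infty\ge1$, and suppose $g\le\ell_u$ pointwise for some $u\in\mathbb{R}^d$ with $0<|u|<1$. Then \[ g^\circ(u)\ge \frac{g^\circ(0)}{e}. \]
   Context: The height function is $\hbar(x)=\sqrt{1-|x|^2}$ for $|x|\le1$ and $\hbar(x)=0$ otherwise. For $|u|<1$, $\ell_u(x)=\hbar(u)\exp\!\big(-\frac{1}{\hbar^2(u)}\langle u,x-u\rangle\big)$. The polar function of a non-negative function $g$ is $g^\circ(p)=\inf_{\{x: g(x)>0\}}\frac{e^{-\langle p,x\rangle}}{g(x)}$. $\|\cdot\|_\infty$ is the supremum norm. *)

From HB Require Import structures.
From mathcomp Require Import all_boot all_order all_algebra.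
From mathcomp Require Import all_classical all_reals all_analysis.
Set Implicit Arguments. Unset Strict Implicit. Unset Printing Implicit Defensive.
Import Order.TTheory GRing.Theory Num.Theory.
Local Open Scope ring_scope.
Local Open Scope classical_set_scope.

Section Defs.
Variables (R : realType) (d : nat).

Definition dotp (x y : 'rV[R]_d) : R := \sum_(i < d) x ord0 i * y ord0 i.
Definition enorm (x : 'rV[R]_d) : R := Num.sqrt (dotp x x).

Definition hbar (x : 'rV[R]_d) : R :=
  if enorm x <= 1 then Num.sqrt (1 - enorm x ^+ 2) else 0.

Definition ell (u x : 'rV[R]_d) : R :=
  hbar u * expR (- ((hbar u ^+ 2)^-1 * dotp u (x - u))).

Definition polar (g : 'rV[R]_d -> R) (p : 'rV[R]_d) : R :=
  inf [set r | exists x, 0 < g x /\ r = expR (- dotp p x) / g x].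

Definition supnorm (g : 'rV[R]_d -> R) : R := sup (range (fun x => `|g x|)).

End Defs.

(** Write [P := g°(0) = inf 1/g]; since [sup g >= 1], [P <= 1].  For [g x > 0]
    put [t := <u,x>].  If [t <= 1] then [e^-t / g x >= e^-1 / g x >= P / e].
    If [t > 1], the tangent-type majorant [ell u] is at most [e^(1-t)] there
    (because [hbar u <= 1]), so [e^-t / g x >= e^-1 >= P / e]. *)
From HB Require Import structures.
From mathcomp Require Import all_boot all_order all_algebra.
From mathcomp Require Import all_classical all_reals all_analysis.
From mathcomp Require Import lra.
Import Order.TTheory GRing.Theory Num.Theory.
Local Open Scope ring_scope.
Local Open Scope classical_set_scope.

Lemma ell_exponent_le (R : realType) (s t : R) :
  0 <= s < 1 -> 1 <= t -> - ((1 - s)^-1 * (t - s)) <= 1 - t.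
Proof.
case/andP=> s_ge0 s_lt1 t_ge1; have s1_gt0 : 0 < 1 - s by rewrite subr_gt0.
rewrite -[1 - t]opprB lerN2 ler_pdivlMl //.
(* [(t - s) - (1 - s)(t - 1) = s (t - 1) + (1 - s) >= 0] *)
have : 0 <= s * (t - 1) by rewrite mulr_ge0 // subr_ge0.
lra.
Qed.

Section UnitBall.
Context {R : realType} {d : nat}.
Implicit Types u x y : 'rV[R]_d.

Lemma dot0p x : dotp 0 x = 0.
Proof. by rewrite /dotp big1 // => i _; rewrite mxE mul0r. Qed.

Lemma dotpBr u x y : dotp u (x - y) = dotp u x - dotp u y.
Proof. by rewrite /dotp -sumrB; apply: eq_bigr => i _; rewrite !mxE mulrBr. Qed.

Lemma dotpp_ge0 u : 0 <= dotp u u.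
Proof. by apply: sumr_ge0 => i _; rewrite -expr2 sqr_ge0. Qed.

Lemma enorm_sqr u : enorm u ^+ 2 = dotp u u.
Proof. by rewrite sqr_sqrtr // dotpp_ge0. Qed.

Lemma dotpp_lt1 {u} : enorm u < 1 -> dotp u u < 1.
Proof.
by move=> u_lt1; rewrite -enorm_sqr -(expr1n R 2) ltrXn2r ?sqrtr_ge0.
Qed.

Lemma hbar_sqr {u} : enorm u <= 1 -> hbar u ^+ 2 = 1 - dotp u u.
Proof.
move=> u_le1; rewrite /hbar u_le1 enorm_sqr sqr_sqrtr // subr_ge0.
by rewrite -enorm_sqr -(expr1n R 2) lerXn2r ?nnegrE ?sqrtr_ge0.
Qed.

Lemma hbar_ge0 u : 0 <= hbar u.
Proof. by rewrite /hbar; case: ifP => // _; rewrite sqrtr_ge0. Qed.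

Lemma hbar_le1 {u} : enorm u <= 1 -> hbar u <= 1.
Proof.
move=> u_le1; have := hbar_sqr u_le1; have := dotpp_ge0 u; have := hbar_ge0 u.
nra.
Qed.

Lemma ell_le_expR {u} x :
  enorm u < 1 -> 1 <= dotp u x -> ell u x <= expR (1 - dotp u x).
Proof.
move=> u_lt1 ux_ge1; rewrite /ell.
apply: (le_trans (y := expR (- ((hbar u ^+ 2)^-1 * dotp u (x - u))))).
  by rewrite -[leRHS]mul1r ler_pM2r ?expR_gt0 ?hbar_le1 ?ltW.
rewrite ler_expR hbar_sqr ?(ltW u_lt1) // dotpBr.
by apply: ell_exponent_le; rewrite // dotpp_ge0 dotpp_lt1.
Qed.

End UnitBall.

Section Polar.
Context {R : realType} {d : nat} {g : 'rV[R]_d -> R}.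
Hypothesis g_ge0 : forall x, 0 <= g x.

Lemma supnorm_le c : (forall x, g x <= c) -> supnorm g <= c.
Proof.
move=> g_le; apply: ge_sup; first by exists `|g 0|, 0.
by move=> _ [x _ <-]; rewrite ger0_norm.
Qed.

Lemma exists_gt0_of_supnorm : 0 < supnorm g -> exists x, 0 < g x.
Proof.
move=> sup_gt0; apply/not_existsP => g_le0.
suff : supnorm g <= 0 by rewrite leNgt sup_gt0.
by apply: supnorm_le => x; rewrite leNgt; apply/negP/g_le0.
Qed.

Lemma polar_le p x : 0 < g x -> polar g p <= expR (- dotp p x) / g x.
Proof.
move=> gx_gt0; apply: ge_inf; last by exists x.
by exists 0 => _ [y [gy_gt0 ->]]; rewrite divr_ge0 ?expR_ge0 ?ltW.
Qed.

Lemma polar0_le_inv x : 0 < g x -> polar g 0 <= (g x)^-1.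
Proof. by move/(polar_le 0); rewrite dot0p oppr0 expR0 div1r. Qed.

Lemma polar0_le1 : 1 <= supnorm g -> polar g 0 <= 1.
Proof.
move=> sup_ge1; rewrite leNgt; apply/negP => P_gt1.
have P_gt0 : 0 < polar g 0 by rewrite (lt_trans _ P_gt1).
suff : supnorm g <= (polar g 0)^-1.
  by move/(le_trans sup_ge1); rewrite invf_ge1 // leNgt P_gt1.
apply: supnorm_le => x; have [gx_gt0|gx_le0] := ltP 0 (g x).
  by rewrite -[g x]invrK lef_pV2 ?posrE ?invr_gt0 ?polar0_le_inv.
by rewrite (le_trans gx_le0) ?invr_ge0 ?ltW.
Qed.

End Polar.

Theorem lemma3p6 (R : realType) (d : nat) (g : 'rV[R]_d -> R) (u : 'rV[R]_d) :
  (forall x, 0 <= g x) ->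
  (exists M : R, forall x, g x <= M) ->
  1 <= supnorm g ->
  0 < enorm u -> enorm u < 1 ->
  (forall x, g x <= ell u x) ->
  polar g u >= polar g 0 / expR 1.
Proof.
move=> g_ge0 _ sup_ge1 _ u_lt1 g_le_ell.
have [x0 gx0_gt0] := exists_gt0_of_supnorm g_ge0 (lt_le_trans ltr01 sup_ge1).
have P_le1 := polar0_le1 g_ge0 sup_ge1.
apply: lb_le_inf; first by exists (expR (- dotp u x0) / g x0), x0.
move=> _ [x [gx_gt0 ->]]; rewrite -expRN.
have [ux_le1|ux_gt1] := leP (dotp u x) 1.
  apply: (le_trans (y := (g x)^-1 * expR (-1))).
    by rewrite ler_pM2r ?expR_gt0 ?polar0_le_inv.
  by rewrite mulrC ler_pM2r ?invr_gt0 // ler_expR lerN2.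
have gx_le : g x <= expR (1 - dotp u x).
  exact: le_trans (g_le_ell x) (ell_le_expR x u_lt1 (ltW ux_gt1)).
apply: (le_trans (y := expR (-1))).
  by rewrite -[leRHS]mul1r ler_pM2r ?expR_gt0.
rewrite ler_pdivlMr // -[- dotp u x](addKr 1) expRD.
by rewrite ler_pM2l ?expR_gt0.
Qed.
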